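(* Let $G=(V,E)$ be a graph with $n = |V| \ge \alpha$ nodes, let $\alpha,\beta>1$, $L=\lceil\log_\beta(n/\alpha)\rceil$, and let $\ell:V\to\{0,\dots,L\}$ be a level assignment with edge weights $w(u,v) = \beta^{-\max(\ell(u),\ell(v))}$ for $(u,v)\in E$ and node weights $W_v = \sum_{u \in \mathcal N_v} w(u,v)$ (where $\mathcal N_v$ is the neighbor set of $v$). Suppose that for every $v\in V$: if $\ell(v)=0$ then $W_v\le\alpha\beta$, and if $\ell(v)\ge 1$ then $1\le W_v\le \alpha\beta$. Then $V^* = \{v\in V: W_v\ge 1\}$ is a vertex cover of $G$, and $|V^*|$ is at most $2\alpha\beta$ times the size of a minimum vertex cover of $G$.
   Context: A vertex cover of $G$ is a set of nodes containing at least one endpoint of every edge. *)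

From mathcomp Require Import all_boot.
From Stdlib Require Import Reals ZArith.
Set Implicit Arguments. Unset Strict Implicit. Unset Printing Implicit Defensive.

(* ceiling of a real number: ceil x = - floor (-x); Int_part is floor *)
Definition Rceil (x : R) : Z := (- Int_part (- x))%Z.

Definition logb (b x : R) : R := (ln x / ln b)%R.

Definition simple_graph (V : finType) (e : rel V) : Prop :=
  symmetric e /\ irreflexive e.

Definition is_vertex_cover (V : finType) (e : rel V) (C : {set V}) : Prop :=
  forall u v, e u v -> (u \in C) || (v \in C).

Definition is_min_vertex_cover (V : finType) (e : rel V) (C : {set V}) : Prop :=
  is_vertex_cover e C /\ forall D : {set V}, is_vertex_cover e D -> #|C| <= #|D|.

Definition edge_weight (V : finType) (beta : R) (l : V -> nat) (u v : V) : R :=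
  (/ (beta ^ (maxn (l u) (l v))))%R.

Definition node_weight (V : finType) (e : rel V) (beta : R) (l : V -> nat) (v : V) : R :=
  \big[Rplus/0%R]_(u | e u v) edge_weight beta l u v.

Definition Rleb (x y : R) : bool := if Rle_dec x y then true else false.

(* Every edge is covered by its endpoint [u] of larger level: if that level is
   positive then [W u >= 1] by hypothesis, and if it is zero the edge itself
   has weight 1.  For the ratio, [#|V*| <= \sum_v W v] since [W >= 1] on [V*]
   and [W >= 0] elsewhere; each edge has an endpoint in the cover [C], to which
   its weight is charged, and charging both orientations of every edge gives
   [\sum_v W v <= 2 \sum_(v in C) W v <= 2 alpha beta #|C|]. *)
From Pilot Require Import Defs.
From mathcomp Require Import all_boot all_order all_algebra.
From mathcomp Require Import Rstruct.
From Stdlib Require Import Reals ZArith.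
Import Pilot.Defs.
Import Order.TTheory GRing.Theory Num.Theory.

Set Implicit Arguments.
Unset Strict Implicit.
Unset Printing Implicit Defensive.

Lemma RlebP x y : reflect (x <= y)%R (Rleb x y).
Proof. by rewrite /Rleb; case: Rle_dec => h; constructor. Qed.

Section NodeWeights.
Local Open Scope ring_scope.

Variables (V : finType) (e : rel V) (beta : R) (l : V -> nat).
Hypothesis beta_gt0 : 0 < beta.

Local Notation w := (edge_weight beta l).
Local Notation W := (node_weight e beta l).

Lemma edge_weight_gt0 u v : 0 < w u v.
Proof. by rewrite /edge_weight RpowE RealsE invr_gt0 exprn_gt0. Qed.

Lemma edge_weightC u v : w u v = w v u.
Proof. by rewrite /edge_weight maxnC. Qed.

Lemma edge_weight_level0 u v : l u = 0%nat -> l v = 0%nat -> w u v = 1.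
Proof. by move=> lu0 lv0; rewrite /edge_weight lu0 lv0 RpowE RealsE expr0 invr1. Qed.

Lemma node_weight_ge0 v : 0 <= W v.
Proof. by apply: sumr_ge0 => u _; apply/ltW/edge_weight_gt0. Qed.

Lemma edge_weight_le_node_weight u v : e u v -> w u v <= W v.
Proof.
move=> euv; rewrite /node_weight (bigD1 u) //= lerDl.
by apply: sumr_ge0 => x _; apply/ltW/edge_weight_gt0.
Qed.

Lemma node_weight_ge1_of_level_le u v :
  (forall x, (0 < l x)%nat -> 1 <= W x) -> e v u -> (l v <= l u)%nat -> 1 <= W u.
Proof.
move=> W_ge1 evu lvu; case: (posnP (l u)) => [lu0 | /W_ge1 //].
have lv0 : l v = 0%nat by apply/eqP; rewrite -leqn0 -lu0.
by rewrite -(edge_weight_level0 lv0 lu0) edge_weight_le_node_weight.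
Qed.

Lemma card_le_sum_node_weight (S : {set V}) :
  (forall v, v \in S -> 1 <= W v) -> #|S|%:R <= \sum_v W v.
Proof.
move=> W_ge1; apply: (@le_trans _ _ (\sum_(v in S) W v)).
  by rewrite -sumr_const; apply: ler_sum.
rewrite [leRHS](bigID [in S]) /= lerDl.
by apply: sumr_ge0 => v _; apply: node_weight_ge0.
Qed.

Hypothesis e_sym : symmetric e.

Lemma node_weight_out u : \sum_(v | e u v) w u v = W u.
Proof.
by apply: eq_big => [v | v _]; [rewrite e_sym | rewrite edge_weightC].
Qed.

Lemma sum_node_weight_le_cover (C : {set V}) :
  is_vertex_cover e C -> \sum_v W v <= 2 * \sum_(v in C) W v.
Proof.
move=> coverC.
pose wC u v := if u \in C then w u v else 0.
have charge v : W v <= \sum_(u | e u v) wC u v + (if v \in C then W v else 0).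
  case: ifP => vC; last first.
    rewrite addr0; apply: ler_sum => u euv.
    by move: (coverC u v euv); rewrite /wC vC orbF => ->.
  rewrite lerDr; apply: sumr_ge0 => u _.
  by rewrite /wC; case: ifP => _ //; apply/ltW/edge_weight_gt0.
have out_charge : \sum_v \sum_(u | e u v) wC u v = \sum_(u in C) W u.
  rewrite (eq_bigr (fun v => \sum_u (if e u v then wC u v else 0)));
    last by move=> v _; rewrite big_mkcond.
  rewrite exchange_big [RHS]big_mkcond; apply: eq_bigr => u _.
  rewrite /wC -node_weight_out; case: ifP => _; first by rewrite [RHS]big_mkcond.
  by rewrite big1 // => v _; case: ifP.
apply: (le_trans (ler_sum _ (fun v _ => charge v))).
by rewrite big_split /= out_charge -big_mkcond mulr_natl mulr2n.
Qed.

End NodeWeights.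

Theorem theorem2p5 (V : finType) (e : rel V) (alpha beta : R) (l : V -> nat) :
  simple_graph e ->
  (1 < alpha)%R -> (1 < beta)%R ->
  (alpha <= INR #|V|)%R ->
  (forall v, (l v <= Z.to_nat (Rceil (logb beta (INR #|V| / alpha))))%nat) ->
  (forall v, l v = 0%nat -> (node_weight e beta l v <= alpha * beta)%R) ->
  (forall v, (1 <= l v)%nat ->
     (1 <= node_weight e beta l v)%R /\ (node_weight e beta l v <= alpha * beta)%R) ->
  let Vstar := [set v | Rleb 1 (node_weight e beta l v)] in
  is_vertex_cover e Vstar /\
  forall C : {set V}, is_min_vertex_cover e C ->
    (INR #|Vstar| <= 2 * alpha * beta * INR #|C|)%R.
Proof.
Local Open Scope ring_scope.
move=> [e_sym _] _ /RltP beta_gt1 _ _ W_level0 W_level_pos Vstar.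
have beta_gt0 : 0 < beta by apply: lt_trans ltr01 beta_gt1.
set W := node_weight e beta l.
have W_le v : W v <= alpha * beta.
  by apply/RleP; case: (posnP (l v)) => [/W_level0 | /W_level_pos []].
have VstarP v : (v \in Vstar) = (1 <= W v) by rewrite inE; apply/RlebP/RleP.
split=> [u v | C [coverC _]].
  wlog lvu : u v / (l v <= l u)%nat => [cover_top euv|euv].
    case: (leqP (l v) (l u)) => [|/ltnW] /cover_top; first exact.
    by rewrite orbC; apply; rewrite e_sym.
  apply/orP; left; rewrite VstarP; apply: (node_weight_ge1_of_level_le beta_gt0) lvu.
  - by move=> x /W_level_pos [/RleP].
  - by rewrite e_sym.
have W_sum_le : \sum_(v in C) W v <= alpha * beta *+ #|C|.
  by rewrite -sumr_const; apply: ler_sum => v _; apply: W_le.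
have Vstar_W_ge1 v : v \in Vstar -> 1 <= W v by rewrite VstarP.
apply/RleP; rewrite !RealsE.
apply: le_trans (card_le_sum_node_weight beta_gt0 Vstar_W_ge1) _.
apply: le_trans (sum_node_weight_le_cover l beta_gt0 e_sym coverC) _.
by rewrite -!mulrA ler_pM2l // mulrA mulr_natr; apply: W_sum_le.
Qed.
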